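(* Let $\Omega=\Omega_1\setminus\overline{\Omega_2}$ be a doubly connected domain with $C^2$ boundary, let $d_1(w)=\operatorname{dist}(w,\partial\Omega_1)$, let $\kappa_0=\operatorname{ess\,sup}\{|\kappa_\zeta|:\zeta\in\partial\Omega_1\}$ where $\kappa_\zeta$ is the curvature of $\partial\Omega_1$ at $\zeta$, let $0<\mu<\kappa_0^{-1}$ and $\Gamma_\mu=\{w\in\Omega: d_1(w)\le\mu\}$. Let $D$ be a planar domain and $w\colon D\to\Omega$ a $(K,K')$-quasiconformal mapping, and set $\chi(z)=-d_1(w(z))$. Then for (almost) every $z\in w^{-1}(\Gamma_\mu)$ at which $w$ is differentiable, $$|\nabla\chi(z)|\le|Dw(z)|\le 2K|\nabla\chi(z)|+\sqrt{K'}.$$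
   Context: $|Dw(z)|=\max\{|Dw(z)h|:|h|=1\}=|w_z|+|w_{\bar z}|$ is the operator norm of the differential, $\|Dw\|^2=|w_x|^2+|w_y|^2=2|w_z|^2+2|w_{\bar z}|^2$, and $J(z,w)=|w_z|^2-|w_{\bar z}|^2$. A sense-preserving ACL mapping $w$ between planar domains is $(K,K')$-quasiconformal ($K\ge1$, $K'\ge0$) if $\|Dw\|^2\le 2KJ(z,w)+K'$ almost everywhere. On $\Gamma_\mu$ the function $d_1$ is $C^2$ with $|\nabla d_1|=1$. *)

From Stdlib Require Import Reals Lra List.
Open Scope R_scope.

Definition Pt : Type := (R * R)%type.

Definition norm2 (p : Pt) : R := sqrt (fst p ^ 2 + snd p ^ 2).
Definition dist2 (p q : Pt) : R := norm2 (fst p - fst q, snd p - snd q).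

Definition open_set (S : Pt -> Prop) : Prop :=
  forall p, S p -> exists r, 0 < r /\ forall q, dist2 p q < r -> S q.

Definition connected_set (S : Pt -> Prop) : Prop :=
  ~ (exists U V : Pt -> Prop, open_set U /\ open_set V /\
       (forall p, S p -> U p \/ V p) /\
       (exists p, S p /\ U p) /\ (exists p, S p /\ V p) /\
       (forall p, S p -> U p -> V p -> False)).

Definition domain (S : Pt -> Prop) : Prop :=
  open_set S /\ connected_set S /\ exists p, S p.

Definition bounded_set (S : Pt -> Prop) : Prop :=
  exists M, forall p, S p -> norm2 p <= M.

Definition closure (S : Pt -> Prop) (p : Pt) : Prop :=
  forall r, 0 < r -> exists q, S q /\ dist2 p q < r.

Definition boundary (S : Pt -> Prop) (p : Pt) : Prop :=
  closure S p /\ closure (fun q => ~ S q) p.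

Definition C2_fun (f f1 f2 : R -> R) : Prop :=
  (forall t, derivable_pt_lim f t (f1 t)) /\
  (forall t, derivable_pt_lim f1 t (f2 t)) /\ continuity f2.

(* a closed curve t |-> (cx t, cy t) of period T, with first and second
   derivatives (cx1,cy1), (cx2,cy2) *)
Record C2curve := mkC2curve {
  cx : R -> R; cy : R -> R;
  cx1 : R -> R; cy1 : R -> R;
  cx2 : R -> R; cy2 : R -> R;
  cperiod : R }.

Definition is_C2_jordan (c : C2curve) : Prop :=
  0 < cperiod c /\
  C2_fun (cx c) (cx1 c) (cx2 c) /\ C2_fun (cy c) (cy1 c) (cy2 c) /\
  (forall t, cx c (t + cperiod c) = cx c t /\ cy c (t + cperiod c) = cy c t) /\
  (forall s t, 0 <= s < cperiod c -> 0 <= t < cperiod c ->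
     cx c s = cx c t -> cy c s = cy c t -> s = t) /\
  (forall t, cx1 c t <> 0 \/ cy1 c t <> 0).

Definition parametrizes (c : C2curve) (B : Pt -> Prop) : Prop :=
  forall p, B p <-> exists t, p = (cx c t, cy c t).

Definition C2_jordan_domain (S : Pt -> Prop) (c : C2curve) : Prop :=
  domain S /\ bounded_set S /\ is_C2_jordan c /\ parametrizes c (boundary S).

Definition curvature (c : C2curve) (t : R) : R :=
  (cx1 c t * cy2 c t - cy1 c t * cx2 c t) /
  (sqrt (cx1 c t ^ 2 + cy1 c t ^ 2)) ^ 3.

Definition is_inf (E : R -> Prop) (m : R) : Prop :=
  (forall x, E x -> m <= x) /\ (forall b, (forall x, E x -> b <= x) -> b <= m).

Definition null1 (A : R -> Prop) : Prop :=
  forall eps, 0 < eps -> exists a b : nat -> R,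
    (forall n, a n <= b n) /\
    (forall x, A x -> exists n, a n <= x <= b n) /\
    (forall N, sum_f_R0 (fun n => b n - a n) N < eps).

Definition null2 (A : Pt -> Prop) : Prop :=
  forall eps, 0 < eps -> exists a b c d : nat -> R,
    (forall n, a n <= b n /\ c n <= d n) /\
    (forall p, A p -> exists n, a n <= fst p <= b n /\ c n <= snd p <= d n) /\
    (forall N, sum_f_R0 (fun n => (b n - a n) * (d n - c n)) N < eps).

(* l = [(s1,t1);...;(sk,tk)] with a <= s1 <= t1 <= s2 <= ... <= tk <= b *)
Fixpoint intervals_in (a b : R) (l : list (R * R)) : Prop :=
  match l with
  | nil => a <= b
  | (s, t) :: r => a <= s /\ s <= t /\ intervals_in t b r
  end.

Definition abs_cont_on (f : R -> Pt) (a b : R) : Prop :=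
  forall eps, 0 < eps -> exists delta, 0 < delta /\
    forall l, intervals_in a b l ->
      fold_right (fun st acc => snd st - fst st + acc) 0 l < delta ->
      fold_right (fun st acc => dist2 (f (snd st)) (f (fst st)) + acc) 0 l < eps.

Definition continuous_on (w : Pt -> Pt) (D : Pt -> Prop) : Prop :=
  forall z, D z -> forall eps, 0 < eps -> exists delta, 0 < delta /\
    forall q, D q -> dist2 z q < delta -> dist2 (w z) (w q) < eps.

Definition ACL (w : Pt -> Pt) (D : Pt -> Prop) : Prop :=
  continuous_on w D /\
  forall a b c d, a < b -> c < d ->
    (forall x y, a <= x <= b -> c <= y <= d -> D (x, y)) ->
    (exists N, null1 N /\ forall y, c <= y <= d -> ~ N y ->
        abs_cont_on (fun x => w (x, y)) a b) /\
    (exists N, null1 N /\ forall x, a <= x <= b -> ~ N x ->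
        abs_cont_on (fun y => w (x, y)) c d).

(* w = u + i v; ux = u_x, uy = u_y, vx = v_x, vy = v_y at z *)
Definition has_partials (w : Pt -> Pt) (z : Pt) (ux uy vx vy : R) : Prop :=
  derivable_pt_lim (fun t => fst (w (fst z + t, snd z))) 0 ux /\
  derivable_pt_lim (fun t => fst (w (fst z, snd z + t))) 0 uy /\
  derivable_pt_lim (fun t => snd (w (fst z + t, snd z))) 0 vx /\
  derivable_pt_lim (fun t => snd (w (fst z, snd z + t))) 0 vy.

Definition differentiable_at (w : Pt -> Pt) (z : Pt) (ux uy vx vy : R) : Prop :=
  forall eps, 0 < eps -> exists delta, 0 < delta /\
    forall h : Pt, norm2 h < delta ->
      dist2 (w (fst z + fst h, snd z + snd h))
            (fst (w z) + ux * fst h + uy * snd h,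
             snd (w z) + vx * fst h + vy * snd h) <= eps * norm2 h.

Definition has_gradient (f : Pt -> R) (z : Pt) (gx gy : R) : Prop :=
  forall eps, 0 < eps -> exists delta, 0 < delta /\
    forall h : Pt, norm2 h < delta ->
      Rabs (f (fst z + fst h, snd z + snd h) - f z - (gx * fst h + gy * snd h))
        <= eps * norm2 h.

(* Wirtinger derivatives: w_z = (w_x - i w_y)/2, w_zbar = (w_x + i w_y)/2 *)
Definition abs_wz (ux uy vx vy : R) : R := norm2 ((ux + vy) / 2, (vx - uy) / 2).
Definition abs_wzb (ux uy vx vy : R) : R := norm2 ((ux - vy) / 2, (vx + uy) / 2).

(* |Dw| = |w_z| + |w_zbar| (operator norm) *)
Definition opnorm (ux uy vx vy : R) : R := abs_wz ux uy vx vy + abs_wzb ux uy vx vy.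
(* ||Dw||^2 = 2|w_z|^2 + 2|w_zbar|^2 *)
Definition hsnorm_sq (ux uy vx vy : R) : R :=
  2 * abs_wz ux uy vx vy ^ 2 + 2 * abs_wzb ux uy vx vy ^ 2.
(* J(z,w) = |w_z|^2 - |w_zbar|^2 *)
Definition jac (ux uy vx vy : R) : R := abs_wz ux uy vx vy ^ 2 - abs_wzb ux uy vx vy ^ 2.

Definition KKquasiconformal (w : Pt -> Pt) (D : Pt -> Prop) (K K' : R) : Prop :=
  1 <= K /\ 0 <= K' /\ ACL w D /\
  exists N, null2 N /\ forall z, D z -> ~ N z ->
    exists ux uy vx vy, has_partials w z ux uy vx vy /\
      0 <= jac ux uy vx vy /\
      hsnorm_sq ux uy vx vy <= 2 * K * jac ux uy vx vy + K'.

(* Write l = |w_z| - |w_zbar| and L = |w_z| + |w_zbar| = |Dw|.  By the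
   Wirtinger decomposition Dw h = w_z h + w_zbar conj(h), the differential
   stretches every vector by a factor between l and L.

   - |grad chi| <= |Dw|: d1 is 1-Lipschitz, so along h parallel to grad chi
     the increment of chi is at most |Dw h| + o(|h|) <= (L + o(1)) |h|.
   - l <= |grad chi|: d1 is an infimum of distances to boundary points, so
     from w(z) one can step a length s towards an almost nearest boundary
     point and decrease d1 by almost s; pulling that step back through the
     inverse of Dw (which exists when l > 0) gives increments h with
     |h| <= s / l along which chi grows by almost s >= l |h|.
   - The (K,K') distortion inequality reads L^2 + l^2 <= 2 K L l + K',
     whence L <= 2 K l + sqrt K' <= 2 K |grad chi| + sqrt K'.

   Both gradient bounds hold at every point where w is differentiable and
   d1(w) > 0. *)
From Pilot Require Import Defs.
From Stdlib Require Import Reals Lra List Classical.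
Open Scope R_scope.

(* Vector operations on the plane, read as complex numbers. *)
Definition padd (p q : Pt) : Pt := (fst p + fst q, snd p + snd q).
Definition pscale (s : R) (p : Pt) : Pt := (s * fst p, s * snd p).
Definition cmul (c h : Pt) : Pt :=
  (fst c * fst h - snd c * snd h, snd c * fst h + fst c * snd h).
Definition cconj (h : Pt) : Pt := (fst h, - snd h).

Definition lin (ux uy vx vy : R) (h : Pt) : Pt :=
  (ux * fst h + uy * snd h, vx * fst h + vy * snd h).

Lemma le_of_sq_le x y : 0 <= y -> x ^ 2 <= y ^ 2 -> x <= y.
Proof. intros; nra. Qed.

Lemma le_of_le_eps x y : (forall e, 0 < e -> x <= y + e) -> x <= y.
Proof.
  intros H. destruct (Rle_or_lt x y) as [|Hlt]; auto.
  specialize (H ((x - y) / 2) ltac:(lra)). lra.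
Qed.

Lemma norm2_nonneg p : 0 <= norm2 p.
Proof. apply sqrt_pos. Qed.

Lemma norm2_sq p : norm2 p ^ 2 = fst p ^ 2 + snd p ^ 2.
Proof. apply pow2_sqrt. nra. Qed.

Lemma abs_fst_le p : Rabs (fst p) <= norm2 p.
Proof.
  apply le_of_sq_le; [apply norm2_nonneg|].
  rewrite norm2_sq, <- !Rsqr_pow2, <- Rsqr_abs, !Rsqr_pow2. nra.
Qed.

Lemma abs_snd_le p : Rabs (snd p) <= norm2 p.
Proof.
  apply le_of_sq_le; [apply norm2_nonneg|].
  rewrite norm2_sq, <- !Rsqr_pow2, <- Rsqr_abs, !Rsqr_pow2. nra.
Qed.

Lemma abs_fst_sub_le p q : Rabs (fst p - fst q) <= dist2 p q.
Proof. apply (abs_fst_le (fst p - fst q, snd p - snd q)). Qed.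

Lemma abs_snd_sub_le p q : Rabs (snd p - snd q) <= dist2 p q.
Proof. apply (abs_snd_le (fst p - fst q, snd p - snd q)). Qed.

Lemma dot_le_norm p q : fst p * fst q + snd p * snd q <= norm2 p * norm2 q.
Proof.
  apply le_of_sq_le; [apply Rmult_le_pos; apply norm2_nonneg|].
  rewrite Rpow_mult_distr, !norm2_sq.
  pose proof (pow2_ge_0 (fst p * snd q - fst q * snd p)). nra.
Qed.

Lemma norm2_add p q : norm2 (padd p q) <= norm2 p + norm2 q.
Proof.
  pose proof (norm2_nonneg p); pose proof (norm2_nonneg q).
  pose proof (dot_le_norm p q).
  apply le_of_sq_le; [lra|]. unfold padd. rewrite norm2_sq; simpl fst; simpl snd.
  pose proof (norm2_sq p); pose proof (norm2_sq q). nra.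
Qed.

Lemma eq_of_sq_eq x y : 0 <= x -> 0 <= y -> x ^ 2 = y ^ 2 -> x = y.
Proof. intros; nra. Qed.

Lemma norm2_pscale s p : norm2 (pscale s p) = Rabs s * norm2 p.
Proof.
  apply eq_of_sq_eq; [apply norm2_nonneg| apply Rmult_le_pos; [apply Rabs_pos|apply norm2_nonneg]|].
  rewrite Rpow_mult_distr, !norm2_sq, <- (Rsqr_pow2 (Rabs s)), <- Rsqr_abs, Rsqr_pow2.
  unfold pscale; simpl; ring.
Qed.

Lemma norm2_cmul c h : norm2 (cmul c h) = norm2 c * norm2 h.
Proof.
  apply eq_of_sq_eq; [apply norm2_nonneg| apply Rmult_le_pos; apply norm2_nonneg|].
  rewrite Rpow_mult_distr, !norm2_sq. unfold cmul; simpl; ring.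
Qed.

Lemma norm2_cconj h : norm2 (cconj h) = norm2 h.
Proof. unfold norm2, cconj; simpl; f_equal; ring. Qed.

Lemma dist2_padd p v : dist2 p (padd p v) = norm2 v.
Proof. unfold dist2, norm2, padd; simpl; f_equal; ring. Qed.

Lemma dist2_triangle p q r : dist2 p r <= dist2 p q + dist2 q r.
Proof.
  unfold dist2.
  replace (fst p - fst r, snd p - snd r) with
    (padd (fst p - fst q, snd p - snd q) (fst q - fst r, snd q - snd r))
    by (unfold padd; simpl; f_equal; ring).
  apply norm2_add.
Qed.

Lemma dist2_sym p q : dist2 p q = dist2 q p.
Proof. unfold dist2, norm2; simpl; f_equal; ring. Qed.

Lemma lin_wirtinger ux uy vx vy h :
  lin ux uy vx vy h =
  padd (cmul ((ux + vy) / 2, (vx - uy) / 2) h)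
       (cmul ((ux - vy) / 2, (vx + uy) / 2) (cconj h)).
Proof. unfold lin, padd, cmul, cconj; simpl; f_equal; field. Qed.

Lemma lin_norm_le ux uy vx vy h :
  norm2 (lin ux uy vx vy h) <= opnorm ux uy vx vy * norm2 h.
Proof.
  rewrite lin_wirtinger. eapply Rle_trans; [apply norm2_add|].
  rewrite !norm2_cmul, norm2_cconj. unfold opnorm, abs_wz, abs_wzb. lra.
Qed.

Lemma lin_norm_ge ux uy vx vy h :
  (abs_wz ux uy vx vy - abs_wzb ux uy vx vy) * norm2 h <= norm2 (lin ux uy vx vy h).
Proof.
  set (P := cmul ((ux + vy) / 2, (vx - uy) / 2) h).
  set (Q := cmul ((ux - vy) / 2, (vx + uy) / 2) (cconj h)).
  assert (HP : P = padd (lin ux uy vx vy h) (pscale (-1) Q)).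
  { unfold P, Q, lin, padd, pscale, cmul, cconj; simpl; f_equal; field. }
  pose proof (norm2_add (lin ux uy vx vy h) (pscale (-1) Q)) as Htri.
  rewrite <- HP, norm2_pscale, Rabs_left in Htri by lra.
  unfold P, Q in Htri. rewrite !norm2_cmul, norm2_cconj in Htri.
  unfold abs_wz, abs_wzb. lra.
Qed.

Lemma jac_det ux uy vx vy : jac ux uy vx vy = ux * vy - uy * vx.
Proof. unfold jac, abs_wz, abs_wzb. rewrite !norm2_sq. simpl. field. Qed.

Lemma lin_solve ux uy vx vy t :
  0 < abs_wz ux uy vx vy - abs_wzb ux uy vx vy ->
  exists h, lin ux uy vx vy h = t /\
    (abs_wz ux uy vx vy - abs_wzb ux uy vx vy) * norm2 h <= norm2 t.
Proof.
  intros Hgap.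
  set (det := ux * vy - uy * vx).
  assert (Hdet : det <> 0).
  { unfold det. rewrite <- jac_det. unfold jac.
    pose proof (norm2_nonneg ((ux - vy) / 2, (vx + uy) / 2)).
    unfold abs_wz, abs_wzb in *. nra. }
  set (h := ((vy * fst t - uy * snd t) / det, (- vx * fst t + ux * snd t) / det)).
  assert (Ht : lin ux uy vx vy h = t).
  { destruct t as [t1 t2]. unfold h, lin, det in *; simpl; f_equal; field; exact Hdet. }
  exists h. split; [exact Ht|]. rewrite <- Ht. apply lin_norm_ge.
Qed.

Lemma differentiable_at_lin w z ux uy vx vy :
  differentiable_at w z ux uy vx vy ->
  forall e, 0 < e -> exists d, 0 < d /\ forall h, norm2 h < d ->
    dist2 (w (padd z h)) (padd (w z) (lin ux uy vx vy h)) <= e * norm2 h.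
Proof.
  intros Hd e He. destruct (Hd e He) as [d [Hd0 Hb]]. exists d. split; [exact Hd0|].
  intros h Hh. specialize (Hb h Hh).
  replace (padd (w z) (lin ux uy vx vy h)) with
    (fst (w z) + ux * fst h + uy * snd h, snd (w z) + vx * fst h + vy * snd h)
    by (unfold padd, lin; simpl; f_equal; ring).
  exact Hb.
Qed.

Lemma derivable_of_tangent_line (c : R -> Pt) (v : Pt) :
  (forall e, 0 < e -> exists d, 0 < d /\ forall h, Rabs h < d ->
     dist2 (c h) (padd (c 0) (pscale h v)) <= e * Rabs h) ->
  derivable_pt_lim (fun t => fst (c t)) 0 (fst v) /\
  derivable_pt_lim (fun t => snd (c t)) 0 (snd v).
Proof.
  intros Hc. split; intros e He; destruct (Hc (e / 2) ltac:(lra)) as [d [Hd Hb]];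
    exists (mkposreal d Hd); intros h Hh0 Hhd; simpl in Hhd;
    specialize (Hb h Hhd); rewrite Rplus_0_l;
    assert (Habs : 0 < Rabs h) by (apply Rabs_pos_lt; exact Hh0);
    apply Rle_lt_trans with (e / 2); try lra;
    apply Rmult_le_reg_r with (Rabs h); try exact Habs;
    rewrite <- Rabs_mult.
  - replace (((fst (c h) - fst (c 0)) / h - fst v) * h) with
      (fst (c h) - fst (padd (c 0) (pscale h v))) by (unfold padd, pscale; simpl; field; exact Hh0).
    eapply Rle_trans; [apply abs_fst_sub_le|exact Hb].
  - replace (((snd (c h) - snd (c 0)) / h - snd v) * h) with
      (snd (c h) - snd (padd (c 0) (pscale h v))) by (unfold padd, pscale; simpl; field; exact Hh0).
    eapply Rle_trans; [apply abs_snd_sub_le|exact Hb].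
Qed.

Lemma norm2_on_axes h : norm2 (h, 0) = Rabs h /\ norm2 (0, h) = Rabs h.
Proof.
  unfold norm2; simpl. rewrite <- sqrt_Rsqr_abs. unfold Rsqr.
  split; f_equal; ring.
Qed.

Lemma differentiable_partials w z ux uy vx vy :
  differentiable_at w z ux uy vx vy -> has_partials w z ux uy vx vy.
Proof.
  destruct z as [z1 z2]. intros Hd. simpl.
  pose proof (differentiable_at_lin _ _ _ _ _ _ Hd) as Hlin.
  assert (Hx : forall e, 0 < e -> exists d, 0 < d /\ forall h, Rabs h < d ->
     dist2 (w (z1 + h, z2)) (padd (w (z1 + 0, z2)) (pscale h (ux, vx))) <= e * Rabs h).
  { intros e He. destruct (Hlin e He) as [d [Hd0 Hb]]. exists d. split; [exact Hd0|].
    intros h Hh. rewrite <- (proj1 (norm2_on_axes h)) in Hh |- *.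
    specialize (Hb (h, 0) Hh). unfold padd at 1 in Hb; simpl in Hb.
    rewrite Rplus_0_r in *.
    replace (pscale h (ux, vx)) with (lin ux uy vx vy (h, 0))
      by (unfold lin, pscale; simpl; f_equal; ring).
    exact Hb. }
  assert (Hy : forall e, 0 < e -> exists d, 0 < d /\ forall h, Rabs h < d ->
     dist2 (w (z1, z2 + h)) (padd (w (z1, z2 + 0)) (pscale h (uy, vy))) <= e * Rabs h).
  { intros e He. destruct (Hlin e He) as [d [Hd0 Hb]]. exists d. split; [exact Hd0|].
    intros h Hh. rewrite <- (proj2 (norm2_on_axes h)) in Hh |- *.
    specialize (Hb (0, h) Hh). unfold padd at 1 in Hb; simpl in Hb.
    rewrite Rplus_0_r in *.
    replace (pscale h (uy, vy)) with (lin ux uy vx vy (0, h))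
      by (unfold lin, pscale; simpl; f_equal; ring).
    exact Hb. }
  destruct (derivable_of_tangent_line (fun t => w (z1 + t, z2)) (ux, vx) Hx) as [Hux Hvx].
  destruct (derivable_of_tangent_line (fun t => w (z1, z2 + t)) (uy, vy) Hy) as [Huy Hvy].
  repeat split; assumption.
Qed.

(* A function with gradient g at z whose increments satisfy
   f(z+h) - f(z) <= (L + o(1)) |h| has |g| <= L: test along h parallel to g. *)
Lemma gradient_norm_le (f : Pt -> R) z gx gy L :
  has_gradient f z gx gy -> 0 <= L ->
  (forall e, 0 < e -> exists d, 0 < d /\ forall h, norm2 h < d ->
     f (padd z h) - f z <= (L + e) * norm2 h) ->
  norm2 (gx, gy) <= L.
Proof.
  intros Hg HL Hup. set (G := norm2 (gx, gy)).
  pose proof (norm2_nonneg (gx, gy)) as HG0. fold G in HG0.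
  destruct (Req_dec G 0) as [HG|HG]; [lra|].
  apply le_of_le_eps. intros e He.
  destruct (Hg (e / 2) ltac:(lra)) as [d1 [Hd1 Hb1]].
  destruct (Hup (e / 2) ltac:(lra)) as [d2 [Hd2 Hb2]].
  set (t := Rmin d1 d2 / 2).
  assert (Ht : 0 < t) by (pose proof (Rmin_glb_lt d1 d2 0 Hd1 Hd2); unfold t; lra).
  set (h := pscale (t / G) (gx, gy)).
  assert (Hh : norm2 h = t).
  { unfold h. rewrite norm2_pscale, Rabs_pos_eq; fold G; [field; lra|].
    apply Rmult_le_pos; [lra| left; apply Rinv_0_lt_compat; lra]. }
  assert (Hdot : gx * fst h + gy * snd h = t * G).
  { assert (HGsq : G ^ 2 = gx ^ 2 + gy ^ 2) by apply norm2_sq.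
    unfold h, pscale; simpl. apply Rmult_eq_reg_r with G; [|lra].
    replace (t * G * G) with (t * G ^ 2) by ring. rewrite HGsq. field. lra. }
  assert (Hh1 : norm2 h < d1) by (rewrite Hh; pose proof (Rmin_l d1 d2); unfold t; lra).
  assert (Hh2 : norm2 h < d2) by (rewrite Hh; pose proof (Rmin_r d1 d2); unfold t; lra).
  specialize (Hb1 h Hh1). specialize (Hb2 h Hh2).
  rewrite Hdot, Hh in Hb1. rewrite Hh in Hb2.
  pose proof (Rle_abs (- (f (padd z h) - f z - t * G))) as Habs.
  rewrite Rabs_Ropp in Habs.
  change (f (fst z + fst h, snd z + snd h)) with (f (padd z h)) in Hb1.
  apply Rmult_le_reg_l with t; [exact Ht|]. lra.
Qed.

Lemma gradient_norm_ge (f : Pt -> R) z gx gy c :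
  has_gradient f z gx gy ->
  (forall e d, 0 < e -> 0 < d -> exists h, 0 < norm2 h < d /\
     (c - e) * norm2 h <= f (padd z h) - f z) ->
  c <= norm2 (gx, gy).
Proof.
  intros Hg Hlow. apply le_of_le_eps. intros e He.
  destruct (Hg (e / 2) ltac:(lra)) as [d [Hd Hb]].
  destruct (Hlow (e / 2) d ltac:(lra) Hd) as [h [[Hh0 Hhd] Hh]].
  specialize (Hb h Hhd).
  change (f (fst z + fst h, snd z + snd h)) with (f (padd z h)) in Hb.
  pose proof (Rle_abs (f (padd z h) - f z - (gx * fst h + gy * snd h))) as Habs.
  pose proof (dot_le_norm (gx, gy) h) as Hcs. simpl fst in Hcs; simpl snd in Hcs.
  apply Rmult_le_reg_r with (norm2 h); [exact Hh0|]. lra.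
Qed.

(* The distance to a set has both properties. *)
Definition nonexpansive (f : Pt -> R) : Prop :=
  forall p q, f q <= f p + dist2 p q.

Definition approx_by_distances (f : Pt -> R) : Prop :=
  forall p eta, 0 < eta ->
    exists q, dist2 p q <= f p + eta /\ forall r, f r <= dist2 r q.

Section DistanceToSet.
Variable B : Pt -> Prop.
Variable d : Pt -> R.
Hypothesis Hd : forall p, is_inf (fun r => exists q, B q /\ r = dist2 p q) (d p).

Lemma inf_dist_nonexpansive : nonexpansive d.
Proof.
  intros p p'. destruct (Hd p) as [_ Hglb]. destruct (Hd p') as [Hlb _].
  cut (d p' - dist2 p p' <= d p); [lra|].
  apply Hglb. intros x [q [Bq ->]].
  assert (d p' <= dist2 p' q) by (apply Hlb; exists q; split; [exact Bq|reflexivity]).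
  pose proof (dist2_triangle p' p q). rewrite (dist2_sym p' p) in *. lra.
Qed.

Lemma inf_dist_approx : approx_by_distances d.
Proof.
  intros p eta Heta.
  destruct (classic (exists q, B q /\ dist2 p q <= d p + eta)) as [[q [Bq Hq]]|Hnone].
  - exists q. split; [exact Hq|]. intros r. apply (proj1 (Hd r)). eauto.
  - exfalso. cut (d p + eta <= d p); [lra|].
    apply (proj2 (Hd p)). intros x [q [Bq ->]].
    destruct (Rle_or_lt (d p + eta) (dist2 p q)) as [|Hlt]; [assumption|].
    exfalso. apply Hnone. exists q. split; [exact Bq|lra].
Qed.

End DistanceToSet.

Lemma dist_boundary_pos (S : Pt -> Prop) (d : Pt -> R) p :
  (forall p, is_inf (fun r => exists q, boundary S q /\ r = dist2 p q) (d p)) ->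
  Defs.open_set S -> S p -> 0 < d p.
Proof.
  intros Hd HS Sp. destruct (HS p Sp) as [r [Hr Hball]].
  apply Rlt_le_trans with r; [exact Hr|].
  apply (proj2 (Hd p)). intros x [q [[_ Hq] ->]].
  destruct (Rle_or_lt r (dist2 p q)) as [|Hlt]; [assumption|].
  destruct (HS q (Hball q Hlt)) as [r' [Hr' Hball']].
  destruct (Hq r' Hr') as [q' [Hq' Hqq']]. contradiction (Hq' (Hball' q' Hqq')).
Qed.

Lemma step_toward p q s :
  0 < dist2 p q -> 0 <= s <= dist2 p q ->
  let t := pscale (s / dist2 p q) (fst q - fst p, snd q - snd p) in
  norm2 t = s /\ dist2 (padd p t) q = dist2 p q - s.
Proof.
  intros HD Hs t. set (D := dist2 p q) in *.
  assert (HqD : norm2 (fst q - fst p, snd q - snd p) = D) by (unfold D; apply dist2_sym).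
  split.
  - unfold t. rewrite norm2_pscale, HqD, Rabs_pos_eq; [field; lra|].
    apply Rmult_le_pos; [lra| left; apply Rinv_0_lt_compat; lra].
  - replace (dist2 (padd p t) q) with (norm2 (pscale (1 - s / D) (fst p - fst q, snd p - snd q)))
      by (unfold dist2, t, padd, pscale; simpl; f_equal; f_equal; ring).
    rewrite norm2_pscale. fold (dist2 p q). fold D.
    rewrite Rabs_pos_eq; [field; lra|].
    replace (1 - s / D) with ((D - s) / D) by (field; lra).
    apply Rmult_le_pos; [lra| left; apply Rinv_0_lt_compat; lra].
Qed.

(* A distance-like function decreases at unit rate in some direction:
   for 0 < s <= f(p) there is a step t of length s after which
   f(y) <= |y - (p + t)| + f(p) - s + eta. *)
Lemma descent_step (f : Pt -> R) p s eta :
  approx_by_distances f -> 0 < s <= f p -> 0 < eta ->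
  exists t, norm2 t = s /\
    forall y, f y <= dist2 y (padd p t) + (f p - s) + eta.
Proof.
  intros Hf Hs Heta. destruct (Hf p eta Heta) as [q [Hpq Hq]].
  pose proof (Hq p) as Hfp.
  destruct (step_toward p q s ltac:(lra) ltac:(lra)) as [Ht Hstep].
  eexists. split; [exact Ht|]. intros y.
  pose proof (dist2_triangle y (padd p (pscale (s / dist2 p q) (fst q - fst p, snd q - snd p))) q).
  pose proof (Hq y). lra.
Qed.

Lemma opnorm_nonneg ux uy vx vy : 0 <= opnorm ux uy vx vy.
Proof.
  unfold opnorm, abs_wz, abs_wzb.
  pose proof (norm2_nonneg ((ux + vy) / 2, (vx - uy) / 2)).
  pose proof (norm2_nonneg ((ux - vy) / 2, (vx + uy) / 2)). lra.
Qed.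

Lemma gradient_le_opnorm (w : Pt -> Pt) (f : Pt -> R) z ux uy vx vy gx gy :
  nonexpansive f ->
  differentiable_at w z ux uy vx vy ->
  has_gradient (fun y => - f (w y)) z gx gy ->
  norm2 (gx, gy) <= opnorm ux uy vx vy.
Proof.
  intros Hf Hd Hg.
  apply (gradient_norm_le _ z gx gy _ Hg); [apply opnorm_nonneg|].
  intros e He. destruct (differentiable_at_lin _ _ _ _ _ _ Hd e He) as [d [Hd0 Hb]].
  exists d. split; [exact Hd0|]. intros h Hh. specialize (Hb h Hh).
  pose proof (Hf (w (padd z h)) (w z)) as Hlip.
  pose proof (dist2_triangle (w (padd z h)) (padd (w z) (lin ux uy vx vy h)) (w z)) as Htri.
  rewrite (dist2_sym (padd (w z) _)), dist2_padd in Htri.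
  pose proof (lin_norm_le ux uy vx vy h). lra.
Qed.

(* Invert Dw
   on a descent step of f of length s to get an increment h of length
   at most s / (|w_z| - |w_zbar|) along which -f(w) grows by about s. *)
Lemma wirtinger_gap_le_gradient (w : Pt -> Pt) (f : Pt -> R) z ux uy vx vy gx gy :
  approx_by_distances f -> 0 < f (w z) ->
  differentiable_at w z ux uy vx vy ->
  has_gradient (fun y => - f (w y)) z gx gy ->
  abs_wz ux uy vx vy - abs_wzb ux uy vx vy <= norm2 (gx, gy).
Proof.
  intros Hf Hpos Hd Hg.
  set (l := abs_wz ux uy vx vy - abs_wzb ux uy vx vy).
  destruct (Rle_or_lt l 0) as [Hl|Hl]; [pose proof (norm2_nonneg (gx, gy)); lra|].
  apply (gradient_norm_ge _ z gx gy l Hg). intros e r He Hr.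
  set (eps := e / (l + 1 + e)).
  assert (Heps : 0 < eps < 1) by (unfold eps; split;
    [apply Rdiv_lt_0_compat|apply Rmult_lt_reg_r with (l + 1 + e); [|unfold Rdiv; rewrite Rmult_assoc, Rinv_l]]; lra).
  assert (Heps_e : eps * (l + 1) <= e).
  { unfold eps. apply Rmult_le_reg_r with (l + 1 + e); [lra|].
    unfold Rdiv. replace (e * / (l + 1 + e) * (l + 1) * (l + 1 + e)) with (e * (l + 1)) by (field; lra).
    nra. }
  destruct (differentiable_at_lin _ _ _ _ _ _ Hd eps (proj1 Heps)) as [dw [Hdw Hb]].
  set (rad := Rmin r dw).
  assert (Hrad : 0 < rad <= r /\ rad <= dw)
    by (split; [split; [apply Rmin_glb_lt; assumption|apply Rmin_l]|apply Rmin_r]).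
  set (s := Rmin (f (w z)) (l * rad) / 2).
  assert (Hs : 0 < s <= f (w z) /\ s < l * rad).
  { pose proof (Rmin_l (f (w z)) (l * rad)); pose proof (Rmin_r (f (w z)) (l * rad)).
    pose proof (Rmin_glb_lt (f (w z)) (l * rad) 0 Hpos ltac:(nra)). unfold s; lra. }
  destruct (descent_step f (w z) s (s * eps) Hf (proj1 Hs) ltac:(nra)) as [t [Ht Hdesc]].
  destruct (lin_solve ux uy vx vy t Hl) as [h [Hht Hhn]]. fold l in Hhn.
  pose proof (lin_norm_le ux uy vx vy h) as Hup. rewrite Hht, Ht in Hup.
  pose proof (norm2_nonneg h) as Hh0. pose proof (opnorm_nonneg ux uy vx vy).
  assert (Hhpos : 0 < norm2 h) by (destruct Hh0 as [|Heq]; [assumption|rewrite <- Heq in Hup; nra]).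
  assert (Hhrad : norm2 h < rad) by nra.
  exists h. split; [split; [exact Hhpos|lra]|].
  specialize (Hb h ltac:(lra)). rewrite Hht in Hb.
  pose proof (Hdesc (w (padd z h))) as Hdec.
  rewrite Ht in Hhn.
  assert (0 <= (s - l * norm2 h) * (1 - eps)) by nra.
  assert (0 <= (e - eps * (l + 1)) * norm2 h) by nra.
  nra.
Qed.

Lemma quadratic_root_bound L l K K' :
  0 <= l -> 1 <= K -> 0 <= K' ->
  L ^ 2 + l ^ 2 <= 2 * K * L * l + K' -> L <= 2 * K * l + sqrt K'.
Proof.
  intros Hl HK HK' Hq.
  set (S := sqrt K'). assert (HS : S ^ 2 = K') by (apply pow2_sqrt; exact HK').
  assert (HS0 : 0 <= S) by apply sqrt_pos.
  destruct (Rle_or_lt L (2 * K * l + S)) as [|Hc]; [assumption|exfalso].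
  assert (H0 : 0 <= 2 * K * l) by (apply Rmult_le_pos; lra).
  assert (L * (2 * K * l + S) < L * L) by (apply Rmult_lt_compat_l; lra).
  assert (S * S <= L * S) by (apply Rmult_le_compat_r; lra).
  nra.
Qed.

(* The (K,K') distortion inequality ||Dw||^2 <= 2 K J + K' together with
   a lower bound G for |w_z| - |w_zbar| bounds |Dw| = |w_z| + |w_zbar|:
   with L = |w_z| + |w_zbar|, l = |w_z| - |w_zbar| it reads L^2 + l^2 <= 2 K L l + K'. *)
Lemma opnorm_le_of_distortion ux uy vx vy K K' G :
  1 <= K -> 0 <= K' -> 0 <= jac ux uy vx vy ->
  hsnorm_sq ux uy vx vy <= 2 * K * jac ux uy vx vy + K' ->
  abs_wz ux uy vx vy - abs_wzb ux uy vx vy <= G ->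
  opnorm ux uy vx vy <= 2 * K * G + sqrt K'.
Proof.
  intros HK HK' HJ Hdist HG. unfold opnorm. unfold jac, hsnorm_sq in *.
  set (a := abs_wz ux uy vx vy) in *. set (b := abs_wzb ux uy vx vy) in *.
  assert (Ha : 0 <= a) by apply norm2_nonneg.
  assert (Hb : 0 <= b) by apply norm2_nonneg.
  assert (Hl : 0 <= a - b) by nra.
  apply Rle_trans with (2 * K * (a - b) + sqrt K'); [|nra].
  apply quadratic_root_bound; [exact Hl|exact HK|exact HK'|nra].
Qed.

Lemma partials_unique w z ux uy vx vy ux' uy' vx' vy' :
  has_partials w z ux uy vx vy -> has_partials w z ux' uy' vx' vy' ->
  ux = ux' /\ uy = uy' /\ vx = vx' /\ vy = vy'.
Proof.
  intros [P1 [P2 [P3 P4]]] [Q1 [Q2 [Q3 Q4]]].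
  repeat split; eapply uniqueness_limite; eassumption.
Qed.

Theorem lemma3p2
  (Omega1 Omega2 : Pt -> Prop) (gamma1 gamma2 : C2curve)
  (HO1 : C2_jordan_domain Omega1 gamma1)
  (HO2 : C2_jordan_domain Omega2 gamma2)
  (Hsub : forall p, closure Omega2 p -> Omega1 p)
  (d1 : Pt -> R)
  (Hd1 : forall p, is_inf (fun r => exists q, boundary Omega1 q /\ r = dist2 p q) (d1 p))
  (kappa0 : R)
  (Hkappa0 : is_lub (fun k => exists t, k = Rabs (curvature gamma1 t)) kappa0)
  (mu : R) (Hmu0 : 0 < mu) (Hmu1 : mu < / kappa0)
  (D : Pt -> Prop) (HD : domain D)
  (w : Pt -> Pt) (K K' : R)
  (Hw : KKquasiconformal w D K K')
  (HwOmega : forall z, D z -> Omega1 (w z) /\ ~ closure Omega2 (w z)) :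
  exists N : Pt -> Prop, null2 N /\
    forall (z : Pt) (ux uy vx vy gx gy : R),
      D z -> ~ N z ->
      (Omega1 (w z) /\ ~ closure Omega2 (w z)) -> d1 (w z) <= mu ->
      differentiable_at w z ux uy vx vy ->
      has_gradient (fun y => - d1 (w y)) z gx gy ->
      norm2 (gx, gy) <= opnorm ux uy vx vy /\
      opnorm ux uy vx vy <= 2 * K * norm2 (gx, gy) + sqrt K'.
Proof.
  destruct Hw as [HK [HK' [_ [N [HN Hdistortion]]]]].
  exists N. split; [exact HN|].
  intros z ux uy vx vy gx gy Dz Nz [Hin _] _ Hdiff Hgrad.
  split.
  - exact (gradient_le_opnorm w d1 z ux uy vx vy gx gy
             (inf_dist_nonexpansive _ d1 Hd1) Hdiff Hgrad).
  - destruct (Hdistortion z Dz Nz) as [ux' [uy' [vx' [vy' [Hpart [HJ Hqc]]]]]].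
    destruct (partials_unique w z _ _ _ _ _ _ _ _ Hpart (differentiable_partials _ _ _ _ _ _ Hdiff))
      as [-> [-> [-> ->]]].
    apply opnorm_le_of_distortion; try assumption.
    destruct HO1 as [[HOpen _] _].
    apply (wirtinger_gap_le_gradient w d1 z); try assumption.
    + exact (inf_dist_approx _ d1 Hd1).
    + exact (dist_boundary_pos Omega1 d1 (w z) Hd1 HOpen Hin).
Qed.
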